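(* Let $s>1$, $\eta(s)=\sum_{k=1}^\infty\frac{1}{(k+1)\ln^s(k+1)}$, let $a_k=\frac{1}{\eta(s)}\cdot\frac{1}{(k+1)\ln^s(k+1)}$ ($k\in\mathbb{N}$), and let $K$ be the associated generalized Cantor set. Then there exist constants $c_1,c_2,b,t_0>0$ with $\ln\ln(b/t)>0$ for $0<t\le t_0$, such that $$c_1(\ln\ln(b/t))^{1-s}\le |K(t)|\le c_2(\ln\ln(b/t))^{1-s}\quad\text{for all } t\in(0,t_0].$$
   Context: Generalized Cantor set for positive $(a_k)$ with $\sum a_k=1$: $K_0=[0,1]$; recursively $K_n$ is obtained from $K_{n-1}$ (a union of $2^{n-1}$ disjoint closed intervals) by removing from each of its intervals the open centered subinterval of length $a_n2^{-(n-1)}$; $K=\bigcap_n K_n$. For $t>0$, $K(t)=\{x\in\mathbb{R}:\operatorname{dist}(x,K)<t\}$ and $|\cdot|$ is Lebesgue measure. *)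

From HB Require Import structures.
From mathcomp Require Import all_boot all_order all_algebra.
From mathcomp Require Import all_classical all_reals all_analysis.
Set Implicit Arguments. Unset Strict Implicit. Unset Printing Implicit Defensive.
Import Order.TTheory GRing.Theory Num.Theory.
Local Open Scope classical_set_scope.
Local Open Scope ring_scope.

(* Closed intervals [l, r] are represented by pairs (l, r). *)
(* cantor_intervals a n = the list of the 2^n closed intervals composing K_n:
   K_0 = [0,1]; K_n is obtained from K_{n-1} by removing from each of its
   intervals [l, r] the open centered subinterval of length a_n 2^{-(n-1)}. *)
Fixpoint cantor_intervals (R : realType) (a : nat -> R) (n : nat)
  : seq (R * R) :=
  match n with
  | 0 => [:: (0, 1)]
  | m.+1 =>
      flatten [seq (let g := a m.+1 / 2 ^+ m in
                    let c := (p.1 + p.2) / 2 in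
                    [:: (p.1, c - g / 2); (c + g / 2, p.2)])
              | p <- cantor_intervals a m]
  end.

Definition cantor_step (R : realType) (a : nat -> R) (n : nat) : set R :=
  [set x | exists2 p, p \in cantor_intervals a n & p.1 <= x <= p.2].

Definition cantor_set (R : realType) (a : nat -> R) : set R :=
  \bigcap_n cantor_step a n.

(* K(t) = {x : dist(x, K) < t}, with dist(x,K) = inf_{y in K} |x - y|;
   dist(x,K) < t iff some y in K has |x - y| < t. *)
Definition nbhd_set (R : realType) (K : set R) (t : R) : set R :=
  [set x | exists2 y, K y & `|x - y| < t].

Definition eta_s (R : realType) (s : R) : R :=
  limn (fun n : nat =>
    \sum_(1 <= k < n) (1 / (k.+1%:R * (ln (k.+1%:R : R)) `^ s))).

(* a_k = 1/eta(s) * 1/((k+1) ln^s(k+1)), for k >= 1 (a_0 is never used) *)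
Definition a_seq (R : realType) (s : R) (k : nat) : R :=
  (1 / eta_s s) * (1 / (k.+1%:R * (ln (k.+1%:R : R)) `^ s)).

From HB Require Import structures.
From mathcomp Require Import all_boot all_order all_algebra.
From mathcomp Require Import all_classical all_reals all_analysis.
From mathcomp Require Import ring lra.
Set Implicit Arguments. Unset Strict Implicit. Unset Printing Implicit Defensive.
Import Order.TTheory GRing.Theory Num.Theory.
Import numFieldNormedType.Exports.
Local Open Scope classical_set_scope.
Local Open Scope ring_scope.

(* 1. Elementary real bounds: mean value estimates for ln, expR and w^-p, and
      crude comparisons between expR and powers of 2.
   2. The tail of the series eta(s) beyond m is comparable to (ln m)^(1-s):
      consecutive differences of the profile (ln x)^(1-s) are comparable to
      the terms, so telescoping bounds the tail from above, and comparing the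
      partial sums up to m and m^2 bounds it from below.
   3. Geometry of the construction for any nonnegative (a_k) with partial sums
      at most 1: K_n consists of 2^n intervals of length (1 - S_n) / 2^n, where
      S_n = a_1 + ... + a_n, and their left endpoints lie in K.
   4. Hence for every m:  1 - S_m <= |K(t)| when 2^-m < t, and
      |K(t)| <= 1 - S_m + 2^m * 2t  (cover K(t) by the enlarged intervals).
   5. For t = e^-L, choose m ~ 2L for the lower bound and m ~ L/2 for the upper
      bound; 1 - S_m is the normalized tail of eta(s), of size
      (ln m)^(1-s) ~ (ln (1 + L))^(1-s) = (ln ln (e/t))^(1-s), and 2^m t is
      negligible.  The theorem follows with b = e and t0 = e^-5. *)

Section ElementaryBounds.
Variable R : realType.
Implicit Types x y z p u v : R.

Lemma ln_le_subr1 z : 0 < z -> ln z <= z - 1.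
Proof.
move=> z0; have := @le_ln1Dx R (z - 1).
have -> : 1 + (z - 1) = z by ring.
by apply; lra.
Qed.

Lemma ln_diff_bounds x y : 0 < x -> x <= y ->
  (y - x) / y <= ln y - ln x <= (y - x) / x.
Proof.
move=> x0 xy; have y0 : 0 < y by lra.
have := ln_le_subr1 (divr_gt0 x0 y0); have := ln_le_subr1 (divr_gt0 y0 x0).
rewrite !ln_div ?posrE // => hyx hxy.
have -> : (y - x) / y = 1 - x / y by field; lra.
have -> : (y - x) / x = y / x - 1 by field; lra.
by apply/andP; split; lra.
Qed.

Lemma expR_diff_bounds x y : x <= y ->
  (y - x) * expR x <= expR y - expR x <= (y - x) * expR y.
Proof.
move=> xy.
have ey : expR y = expR x * expR (y - x) by rewrite -expRD addrC subrK.
have ex : expR x = expR y * expR (x - y) by rewrite -expRD addrC subrK.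
have := expR_ge1Dx (y - x); have := expR_ge1Dx (x - y).
have := expR_gt0 x; have := expR_gt0 y.
by move=> ? ? ? ?; apply/andP; split; nra.
Qed.

Lemma inv_powR_diff_bounds p u v : 0 < p -> 0 < u -> u <= v ->
  p * (v - u) / v `^ (p + 1) <= (u `^ p)^-1 - (v `^ p)^-1
    <= p * (v - u) / u `^ (p + 1).
Proof.
move=> p0 u0 uv; have v0 : 0 < v by lra.
have invE w : 0 < w -> (w `^ p)^-1 = expR (- (p * ln w)).
  by move=> w0; rewrite expRN /powR gt_eqF.
have powS w : 0 < w -> w `^ (p + 1) = w * w `^ p.
  by move=> w0; rewrite powRD ?(gt_eqF w0) ?implybT // powRr1 ?(ltW w0) // mulrC.
have /andP[lnlo lnhi] := ln_diff_bounds u0 uv.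
have lnuv : ln u <= ln v by rewrite ler_ln ?posrE.
have expuv : - (p * ln v) <= - (p * ln u) by rewrite lerN2 ler_pM2l.
have := expR_diff_bounds expuv; rewrite -!invE // !powS // !invfM.
have -> : - (p * ln u) - - (p * ln v) = p * (ln v - ln u) by ring.
move=> /andP[lo hi].
have Eu0 : 0 < (u `^ p)^-1 by rewrite invr_gt0 powR_gt0.
have Ev0 : 0 < (v `^ p)^-1 by rewrite invr_gt0 powR_gt0.
apply/andP; split.
- apply: le_trans lo; rewrite mulrA -(mulrA p).
  by rewrite ler_pM2r // ler_pM2l.
- apply: le_trans hi _; rewrite [X in _ <= X]mulrA -(mulrA p (v - u)).
  by rewrite ler_pM2r // ler_pM2l.
Qed.

Lemma inv_powR_antitone p u v : 0 <= p -> 0 < u -> u <= v ->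
  (v `^ p)^-1 <= (u `^ p)^-1.
Proof.
move=> p0 u0 uv; rewrite lef_pV2 ?posrE ?powR_gt0 //; last lra.
by apply: ge0_ler_powR; rewrite ?nnegrE // ltW //; lra.
Qed.

Lemma inv_powR_halve q u v : 0 <= q -> 0 < v -> v <= 2 * u ->
  (u `^ q)^-1 <= 2 `^ q * (v `^ q)^-1.
Proof.
move=> q0 v0 vu; have u0 : 0 < u by lra.
have := inv_powR_antitone q0 v0 vu.
rewrite powRM ?ler0n ?(ltW u0) // invfM mulrC -ler_pdivlMr ?invr_gt0 ?powR_gt0 //.
by rewrite invrK mulrC.
Qed.

(* ln (x+1) <= ln (x^2) once x >= 2: consecutive logarithms are within a factor 2. *)
Lemma ln_succ_le_double x : 2 <= x -> ln (x + 1) <= 2 * ln x.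
Proof.
move=> x2; have -> : 2 * ln x = ln (x * x) by rewrite lnM ?posrE; lra.
by rewrite ler_ln ?posrE ?mulr_gt0; nra.
Qed.

(* Crude comparisons between the exponential and powers of 2 (they amount to
   1/2 <= ln 2 <= 1). *)
Lemma expR_half_le_pow2 (m : nat) : expR (m%:R / 2) <= 2 ^+ m :> R.
Proof.
have half_le2 : expR (2^-1) <= 2 :> R.
  have e0 := expR_gt0 (2^-1 : R); have := expR_ge1Dx (- 2^-1 : R).
  have EE : expR (2^-1) * (expR (2^-1))^-1 = 1 :> R by rewrite mulfV // gt_eqF.
  rewrite expRN; nra.
by rewrite expRM_natl lerXn2r ?nnegrE ?expR_ge0.
Qed.

Lemma pow2_le_expR (m : nat) : 2 ^+ m <= expR m%:R :> R.
Proof.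
rewrite -[m%:R]mulr1 expRM_natl lerXn2r ?nnegrE ?expR_ge0 //.
by have := expR_ge1Dx (1 : R); rewrite (_ : 1 + 1 = 2 :> R).
Qed.

Lemma powR_mul_expR_le p L : 0 < p -> 0 < L ->
  L `^ p * expR (- (L / 2)) <= (2 * p) `^ p.
Proof.
move=> p0 L0; have p20 : 0 < 2 * p by rewrite mulr_gt0.
rewrite /powR !gt_eqF // -expRD ler_expR.
have := ln_le_subr1 (divr_gt0 L0 p20); rewrite ln_div ?posrE // => lnL.
have : p * (ln L - ln (2 * p)) <= p * (L / (2 * p) - 1) by rewrite ler_pM2l.
have -> : p * (L / (2 * p) - 1) = L / 2 - p by field; lra.
lra.
Qed.

End ElementaryBounds.

Section SeriesTail.
Variable R : realType.
Variable s : R.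
Hypothesis s_gt1 : 1 < s.

Let s_sub1_gt0 : 0 < s - 1. Proof. by rewrite subr_gt0. Qed.

Definition eta_term (k : nat) : R := 1 / (k.+1%:R * ln k.+1%:R `^ s).

Definition eta_partial (n : nat) : R := \sum_(1 <= k < n) eta_term k.

(* The profile x |-> (ln x)^(1-s) of the tails of the series: up to the
   factor s - 1 it is a primitive of -1 / (x ln^s x). *)
Definition log_tail (x : R) : R := (ln x `^ (s - 1))^-1.

(* Comparison constants of one step, and of the tail beyond m versus beyond m^2. *)
Definition step_const : R := 2 * 2 `^ s.
Definition tail_const : R := (1 - (2 `^ (s - 1))^-1) / ((s - 1) * step_const).

Lemma eta_term_ge0 k : 0 <= eta_term k.
Proof. by rewrite divr_ge0 // mulr_ge0 // powR_ge0. Qed.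

Lemma log_tail_ge0 x : 0 <= log_tail x.
Proof. by rewrite invr_ge0 powR_ge0. Qed.

Lemma tail_const_gt0 : 0 < tail_const.
Proof.
have two_pow_gt1 : 1 < 2 `^ (s - 1) :> R.
  by rewrite /powR pnatr_eq0 expR_gt1 mulr_gt0 // ln_gt0 // ltr1n.
rewrite divr_gt0 ?mulr_gt0 ?powR_gt0 // subr_gt0 invf_lt1 //; lra.
Qed.

Lemma log_tail_step (k : nat) : (2 <= k)%N ->
  (s - 1) * eta_term k <= log_tail k%:R - log_tail k.+1%:R
    <= (s - 1) * step_const * eta_term k.
Proof.
move=> k2; have x2 : 2 <= k%:R :> R by rewrite (ler_nat R 2).
rewrite /log_tail /eta_term -natr1; set x := k%:R in x2 *.
have x0 : 0 < x by lra.
have u0 : 0 < ln x by apply: ln_gt0; lra.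
have uv : ln x <= ln (x + 1) by rewrite ler_ln ?posrE; lra.
have v2u := ln_succ_le_double x2.
have /andP[dlo dhi] := ln_diff_bounds x0 (ler_wpDr ler01 (lexx x)).
rewrite addrAC subrr add0r in dlo dhi.
have /andP[lo hi] := inv_powR_diff_bounds s_sub1_gt0 u0 uv.
rewrite subrK in lo hi.
set u := ln x in u0 uv v2u dlo dhi lo hi *.
set v := ln (x + 1) in uv v2u dlo dhi lo hi *.
have v0 : 0 < v by lra.
apply/andP; split.
- apply: le_trans lo; rewrite mul1r invfM mulrA.
  by rewrite ler_pM2r ?invr_gt0 ?powR_gt0 // ler_pM2l // -[_^-1]mul1r.
- apply: le_trans hi _.
  have inv_u := inv_powR_halve (ltW (lt_trans ltr01 s_gt1)) v0 v2u.
  have dv : v - u <= 2 / (x + 1).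
    by apply: le_trans dhi _; rewrite ler_pdivrMr // mulrAC ler_pdivlMr; lra.
  have -> : (s - 1) * step_const * (1 / ((x + 1) * v `^ s))
      = (s - 1) * (2 / (x + 1)) * (2 `^ s * (v `^ s)^-1).
    by rewrite /step_const mul1r invfM; ring.
  have p0 := ltW s_sub1_gt0.
  apply: ler_pM; rewrite ?mulr_ge0 ?invr_ge0 ?powR_ge0 //; try lra.
  by rewrite ler_pM2l.
Qed.

Lemma eta_partial_nondecreasing :
  {homo eta_partial : m n / (m <= n)%N >-> m <= n}.
Proof.
move=> m n mn; have terms_ge0 i j : 0 <= \sum_(i <= k < j) eta_term k.
  by rewrite sumr_ge0 // => k _; apply: eta_term_ge0.
rewrite /eta_partial; case: m mn => [|m] mn; first by rewrite big_geq.
by rewrite (big_cat_nat (_ : (1 <= m.+1)%N) mn) //= lerDl.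
Qed.

Lemma eta_partial_sub m n : (1 <= m <= n)%N ->
  eta_partial n - eta_partial m = \sum_(m <= k < n) eta_term k.
Proof. by case/andP=> m1 mn; rewrite /eta_partial (big_cat_nat m1 mn) addrC addKr. Qed.

Lemma log_tail_telescope m n : (m <= n)%N ->
  \sum_(m <= k < n) (log_tail k%:R - log_tail k.+1%:R)
    = log_tail m%:R - log_tail n%:R.
Proof.
move=> mn; rewrite -[RHS]opprK opprB.
rewrite -(telescope_sumr (fun k => log_tail k%:R) mn) -sumrN.
by apply: eq_bigr => k _; rewrite opprB.
Qed.

Lemma eta_partial_tail_bounds m n : (2 <= m <= n)%N ->
  (s - 1) * (eta_partial n - eta_partial m) <= log_tail m%:R - log_tail n%:R
    <= (s - 1) * step_const * (eta_partial n - eta_partial m).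
Proof.
case/andP=> m2 mn; rewrite eta_partial_sub ?(ltnW m2) // !mulr_sumr.
rewrite -log_tail_telescope // !big_nat.
by apply/andP; split; apply: ler_sum => k /andP[mk _];
  case/andP: (log_tail_step (leq_trans m2 mk)).
Qed.

Lemma eta_partial_cvg : cvgn eta_partial.
Proof.
apply/cvg_ex; exists (sup (range eta_partial)).
apply: nondecreasing_cvgn eta_partial_nondecreasing _.
exists (eta_partial 2 + log_tail 2%:R / (s - 1)) => _ [n _ <-].
apply: le_trans (eta_partial_nondecreasing (leq_maxr 2 n)) _.
have /andP[lo _] := @eta_partial_tail_bounds 2 (maxn 2 n) (leq_maxl 2 n).
rewrite -lerBlDl ler_pdivlMr // mulrC; apply: le_trans lo _.
by rewrite lerBlDr lerDl log_tail_ge0.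
Qed.

Lemma eta_partial_le_eta n : eta_partial n <= eta_s s.
Proof. exact: nondecreasing_cvgn_le eta_partial_nondecreasing eta_partial_cvg n. Qed.

Lemma eta_gt0 : 0 < eta_s s.
Proof.
apply: lt_le_trans (eta_partial_le_eta 2).
by rewrite /eta_partial big_nat1 divr_gt0 // mulr_gt0 // powR_gt0 // ln_gt0 // ltr1n.
Qed.

Lemma eta_tail_ub m : (2 <= m)%N ->
  eta_s s - eta_partial m <= log_tail m%:R / (s - 1).
Proof.
move=> m2; rewrite lerBlDl; apply: limr_le eta_partial_cvg _.
near=> n; have mn : (m <= n)%N by near: n; exact: nbhs_infty_ge.
have m2n : (2 <= m <= n)%N by rewrite m2.
have /andP[lo _] := eta_partial_tail_bounds m2n.
rewrite -lerBlDl ler_pdivlMr // mulrC; apply: le_trans lo _.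
by rewrite lerBlDr lerDl log_tail_ge0.
Unshelve. all: by end_near.
Qed.

Lemma log_tail_sqr m : (1 <= m)%N ->
  log_tail (m ^ 2)%:R = (2 `^ (s - 1))^-1 * log_tail m%:R.
Proof.
move=> m1; rewrite /log_tail natrX lnXn ?ltr0n // -[_ *+ 2]mulr_natr.
by rewrite powRM ?invfM 1?mulrC // ln_ge0 // ler1n.
Qed.

(* Lower bound for the tail of the series beyond m: compare with the
   partial sum up to m^2, whose profile drop is a fixed fraction of log_tail m. *)
Lemma eta_tail_lb m : (2 <= m)%N ->
  tail_const * log_tail m%:R <= eta_s s - eta_partial m.
Proof.
move=> m2; have mm : (2 <= m <= m ^ 2)%N.
  by rewrite m2 /= expnS expn1 leq_pmulr // ltnW.
have /andP[_ hi] := eta_partial_tail_bounds mm.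
rewrite log_tail_sqr ?(ltnW m2) // in hi.
have sc0 : 0 < (s - 1) * step_const by rewrite mulr_gt0 ?powR_gt0 ?mulr_gt0.
rewrite /tail_const mulrAC ler_pdivrMr // mulrC.
apply: le_trans (_ : (s - 1) * step_const * (eta_partial (m ^ 2) - eta_partial m) <= _).
  by apply: le_trans hi; rewrite mulrBr mulr1 mulrC.
by rewrite [X in _ <= X]mulrC ler_pM2l // lerD2r eta_partial_le_eta.
Qed.

End SeriesTail.

Section CantorGeometry.
Variable R : realType.
Variable a : nat -> R.

Local Notation I := (cantor_intervals a).

Definition cantor_children (n : nat) (p : R * R) : seq (R * R) :=
  let g := a n.+1 / 2 ^+ n in
  let c := (p.1 + p.2) / 2 in
  [:: (p.1, c - g / 2); (c + g / 2, p.2)].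

Definition cantor_removed (n : nat) : R := \sum_(1 <= k < n.+1) a k.

Definition cantor_gap (n : nat) (p : R * R) : set R :=
  `](p.1 + p.2) / 2 - a n.+1 / 2 ^+ n / 2, (p.1 + p.2) / 2 + a n.+1 / 2 ^+ n / 2[.
Definition cantor_gaps (n : nat) : set R := \big[setU/set0]_(p <- I n) cantor_gap n p.
Definition cantor_removed_set (n : nat) : set R :=
  \big[setU/set0]_(0 <= k < n) cantor_gaps k.

Lemma cantor_intervalsS n : I n.+1 = flatten [seq cantor_children n p | p <- I n].
Proof. by []. Qed.

Lemma mem_cantor_intervalsS n q :
  q \in I n.+1 <-> exists2 p, p \in I n & q \in cantor_children n p.
Proof. by rewrite cantor_intervalsS; split => /flatten_mapP. Qed.

Lemma size_cantor_intervals n : size (I n) = (2 ^ n)%N.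
Proof.
elim: n => [//|n IH]; rewrite cantor_intervalsS expnS -IH.
by elim: (I n) => [//|p l IHl]; rewrite /= IHl mulnS.
Qed.

Lemma cantor_interval_length n p :
  p \in I n -> p.2 - p.1 = (1 - cantor_removed n) / 2 ^+ n.
Proof.
elim: n p => [|n IH] p.
  by rewrite inE => /eqP -> /=; rewrite /cantor_removed big_geq // !subr0 divr1.
have pow2_neq0 : (2 : R) ^+ n != 0 by rewrite expf_neq0 ?pnatr_eq0.
have removedS : cantor_removed n.+1 = cantor_removed n + a n.+1.
  by rewrite /cantor_removed big_nat_recr.
case/mem_cantor_intervalsS => q /IH lenq; rewrite removedS exprS.
have q2E : q.2 = q.1 + (1 - cantor_removed n) / 2 ^+ n by rewrite -lenq addrC subrK.
by rewrite !inE => /orP[] /eqP -> /=; rewrite q2E; field.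
Qed.

Hypothesis a_ge0 : forall k, 0 <= a k.
Hypothesis removed_le1 : forall n, cantor_removed n <= 1.

Lemma cantor_interval_le n p : p \in I n -> p.1 <= p.2.
Proof.
move=> /cantor_interval_length lenp; rewrite -subr_ge0 lenp.
by rewrite divr_ge0 ?exprn_ge0 // subr_ge0.
Qed.

Lemma cantor_step_decreasing n : cantor_step a n.+1 `<=` cantor_step a n.
Proof.
move=> x [q /mem_cantor_intervalsS [p pI qp] xq]; exists p => //.
have g0 : 0 <= a n.+1 / 2 ^+ n by rewrite divr_ge0 // exprn_ge0.
by move: qp xq; rewrite !inE => /orP[] /eqP -> /= /andP[xl xr];
  apply/andP; split; lra.
Qed.

Lemma cantor_step_subset m n : (m <= n)%N -> cantor_step a n `<=` cantor_step a m.
Proof.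
move=> /subnKC <-; elim: (n - m)%N => [|j IH]; first by rewrite addn0.
by rewrite addnS; apply: subset_trans IH; apply: cantor_step_decreasing.
Qed.

Lemma cantor_left_endpoint_persists m j p :
  p \in I m -> exists2 q, q \in I (m + j) & q.1 = p.1.
Proof.
move=> pI; elim: j => [|j [q qI <-]]; first by exists p; rewrite ?addn0.
exists (cantor_children (m + j) q)`_0 => //.
by rewrite addnS; apply/mem_cantor_intervalsS; exists q; rewrite ?inE ?eqxx.
Qed.

Lemma cantor_left_endpoint_mem m p : p \in I m -> cantor_set a p.1.
Proof.
move=> pI n _; have [mn|nm] := leqP m n.
  have [q] := cantor_left_endpoint_persists (n - m) pI; rewrite subnKC // => qI <-.
  by exists q; rewrite // lexx (cantor_interval_le qI).
apply: (cantor_step_subset (ltnW nm)); exists p => //.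
by rewrite lexx (cantor_interval_le pI).
Qed.

Lemma cantor_step_cover n : cantor_step a n `<=` cantor_step a n.+1 `|` cantor_gaps n.
Proof.
move=> x [p pI /andP[xl xr]].
set c := (p.1 + p.2) / 2; set g := a n.+1 / 2 ^+ n.
have childI q : q \in cantor_children n p -> q \in I n.+1.
  by move=> qp; apply/mem_cantor_intervalsS; exists p.
have [xlc|clx] := leP x (c - g / 2).
  left; exists (p.1, c - g / 2); first by apply: childI; rewrite inE eqxx.
  by rewrite /= xl xlc.
have [crx|xcr] := leP (c + g / 2) x.
  left; exists (c + g / 2, p.2); first by apply: childI; rewrite !inE eqxx orbT.
  by rewrite /= xr crx.
right; rewrite /cantor_gaps -bigcup_seq; exists p => //.
by rewrite /cantor_gap /= in_itv /= clx xcr.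
Qed.

Lemma cantor_unit_cover n : `[0, 1] `<=` cantor_step a n `|` cantor_removed_set n.
Proof.
elim: n => [|n IH] x x01.
  by left; exists (0, 1); rewrite ?inE //; move: x01; rewrite /= in_itv.
rewrite /cantor_removed_set big_nat_recr //=.
case: (IH x x01) => [/cantor_step_cover [|]|]; by [left | right; right | right; left].
Qed.

End CantorGeometry.

Section NeighbourhoodMeasure.
Variable R : realType.
Local Notation mu := (@lebesgue_measure R).

Lemma measure_bigsetU_le (J : Type) (l : seq J) (F : J -> set R) :
  (forall i, measurable (F i)) ->
  (mu (\big[setU/set0]_(i <- l) F i) <= \sum_(i <- l) mu (F i))%E.
Proof.
move=> mF; elim: l => [|i l IH]; first by rewrite !big_nil measure0.
rewrite !big_cons.
apply: le_trans (measureU2 mu (mF i) (bigsetU_measurable l (fun j _ => mF j))) _.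
exact: leeD.
Qed.

Lemma measure_oo_itv (x y : R) : x <= y -> mu `]x, y[ = (y - x)%:E.
Proof.
move=> xy; rewrite lebesgue_measure_itv /= lte_fin.
by case: ltgtP xy => // -> _; rewrite subrr.
Qed.

Lemma nbhd_set_open (K : set R) t : open (nbhd_set K t).
Proof.
have -> : nbhd_set K t = \bigcup_(y in K) `]y - t, y + t[%classic.
  apply/seteqP; split => x.
    by case=> y Ky xy; exists y => //=; rewrite in_itv /= -ltr_distlC distrC.
  by case=> y Ky; rewrite /= in_itv /= -ltr_distlC distrC => xy; exists y.
by apply: bigcup_open => y _; apply: itv_open.
Qed.

Lemma nbhd_set_measurable (K : set R) t : measurable (nbhd_set K t).
Proof. by apply: measurable_realfun.open_measurable; apply: nbhd_set_open. Qed.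

Variable a : nat -> R.
Hypothesis a_ge0 : forall k, 0 <= a k.
Hypothesis removed_le1 : forall n, cantor_removed a n <= 1.

Lemma cantor_gaps_measurable n : measurable (cantor_gaps a n).
Proof. by apply: bigsetU_measurable => p _; exact: measurable_itv. Qed.

Lemma measure_cantor_gaps n : (mu (cantor_gaps a n) <= (a n.+1)%:E)%E.
Proof.
apply: le_trans (measure_bigsetU_le _ (fun p => measurable_itv _)) _.
have g0 : 0 <= a n.+1 / 2 ^+ n / 2 by rewrite !divr_ge0 ?exprn_ge0.
rewrite (eq_bigr (fun _ => (a n.+1 / 2 ^+ n)%:E)); last first.
  by move=> p _; rewrite /cantor_gap measure_oo_itv; [congr EFin; field | lra].
rewrite sumEFin big_const_seq count_predT iter_addr addr0 size_cantor_intervals lee_fin.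
by rewrite -[_ *+ 2 ^ n]mulr_natr natrX mulfVK // expf_neq0 // pnatr_eq0.
Qed.

Lemma measure_cantor_removed_set n :
  (mu (cantor_removed_set a n) <= (cantor_removed a n)%:E)%E.
Proof.
apply: le_trans (measure_bigsetU_le _ (@cantor_gaps_measurable)) _.
apply: le_trans (_ : \sum_(0 <= k < n) (a k.+1)%:E <= _)%E.
  by apply: lee_sum => k _; apply: measure_cantor_gaps.
by rewrite sumEFin lee_fin /cantor_removed big_add1.
Qed.

(* Lower bound: once t exceeds 2^-m, every point of K_m is within t of a left
   endpoint (which lies in K), so [0, 1] is covered by K(t) and the set
   removed up to step m. *)
Lemma cantor_nbhd_measure_lb m t : (2 ^+ m)^-1 < t ->
  ((1 - cantor_removed a m)%:E <= mu (nbhd_set (cantor_set a) t))%E.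
Proof.
move=> mt; have removed_ge0 : 0 <= cantor_removed a m by rewrite sumr_ge0.
have cover : `[0, 1] `<=` nbhd_set (cantor_set a) t `|` cantor_removed_set a m.
  move=> x /(cantor_unit_cover a m) [[p pI /andP[xl xr]]|]; last by right.
  left; exists p.1; first exact: (cantor_left_endpoint_mem a_ge0 removed_le1 pI).
  have := cantor_interval_length pI.
  have : (1 - cantor_removed a m) / 2 ^+ m <= (2 ^+ m)^-1.
    by rewrite ler_pdivrMr ?exprn_gt0 // mulVf ?expf_neq0 //; lra.
  by move=> ? ?; rewrite ger0_norm; lra.
have removed_meas : measurable (cantor_removed_set a m).
  by apply: bigsetU_measurable => k _; exact: cantor_gaps_measurable.
have nbhd_meas := nbhd_set_measurable (cantor_set a) t.
have unit_le : (1 <= mu (nbhd_set (cantor_set a) t `|` cantor_removed_set a m))%E.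
  have <- : mu `[0%R, 1%R]%classic = 1%E.
    by rewrite lebesgue_measure_itv /= lte_fin ltr01 -EFinB subr0.
  by apply: le_measure => //; rewrite inE //; apply: measurableU.
rewrite EFinB leeBlDr //; apply: le_trans unit_le _.
apply: le_trans (measureU2 mu nbhd_meas removed_meas) _.
by apply: leeD => //; apply: measure_cantor_removed_set.
Qed.

(* Upper bound: K(t) is covered by the 2^m intervals of K_m enlarged by t on
   each side. *)
Lemma cantor_nbhd_measure_ub m t : 0 < t ->
  (mu (nbhd_set (cantor_set a) t)
     <= (1 - cantor_removed a m + 2 ^+ m * (2 * t))%:E)%E.
Proof.
move=> t0; set J := fun p : R * R => `]p.1 - t, p.2 + t[%classic.
have cover :
    nbhd_set (cantor_set a) t `<=` \big[setU/set0]_(p <- cantor_intervals a m) J p.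
  move=> x [y Ky]; rewrite distrC ltr_distlC => /andP[xl xr].
  have [p pI /andP[yl yr]] := Ky m Logic.I.
  rewrite -bigcup_seq; exists p => //.
  by rewrite /J /= in_itv /=; apply/andP; split; lra.
apply: le_trans (le_measure mu _ _ cover) _; rewrite ?inE.
- exact: nbhd_set_measurable.
- by apply: bigsetU_measurable => p _; exact: measurable_itv.
apply: le_trans (measure_bigsetU_le _ (fun p => measurable_itv _)) _.
rewrite big_seq.
rewrite (eq_bigr (fun _ => ((1 - cantor_removed a m) / 2 ^+ m + 2 * t)%:E)); last first.
  move=> p pI; have lenp := cantor_interval_length pI.
  have ple := cantor_interval_le removed_le1 pI.
  by rewrite /J measure_oo_itv; [congr EFin; rewrite -lenp; ring | lra].
rewrite -big_seq sumEFin big_const_seq count_predT iter_addr addr0.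
rewrite size_cantor_intervals.
rewrite lee_fin -[_ *+ 2 ^ m]mulr_natr natrX mulrDl mulfVK ?expf_neq0 ?pnatr_eq0 //.
by rewrite mulrC.
Qed.

End NeighbourhoodMeasure.

Section EtaCantorSet.
Variable R : realType.
Variable s : R.
Hypothesis s_gt1 : 1 < s.
Local Notation mu := (@lebesgue_measure R).
Local Notation K := (cantor_set (a_seq s)).

Let s_sub1_gt0 : 0 < s - 1. Proof. by rewrite subr_gt0. Qed.

Lemma a_seq_ge0 k : 0 <= a_seq s k.
Proof.
by rewrite /a_seq mul1r mulr_ge0 ?invr_ge0 ?(ltW (eta_gt0 s_gt1)) ?eta_term_ge0.
Qed.

Lemma cantor_removed_a_seq n :
  cantor_removed (a_seq s) n = eta_partial s n.+1 / eta_s s.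
Proof.
rewrite /cantor_removed /eta_partial mulr_suml; apply: eq_bigr => k _.
by rewrite /a_seq mul1r mulrC.
Qed.

Lemma cantor_removed_a_seq_le1 n : cantor_removed (a_seq s) n <= 1.
Proof.
rewrite cantor_removed_a_seq ler_pdivrMr ?(eta_gt0 s_gt1) // mul1r.
exact: eta_partial_le_eta.
Qed.

Lemma one_sub_cantor_removed_a_seq n :
  1 - cantor_removed (a_seq s) n = (eta_s s - eta_partial s n.+1) / eta_s s.
Proof. by rewrite cantor_removed_a_seq mulrBl divff // gt_eqF // eta_gt0. Qed.

Definition lb_const : R := tail_const s / eta_s s / 2 `^ (s - 1).
Definition ub_const : R :=
  2 `^ (s - 1) / ((s - 1) * eta_s s) + 2 * (2 * (s - 1)) `^ (s - 1).

Lemma lb_const_gt0 : 0 < lb_const.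
Proof.
apply: divr_gt0; last exact: powR_gt0.
exact: divr_gt0 (tail_const_gt0 s_gt1) (eta_gt0 s_gt1).
Qed.

Lemma ub_const_gt0 : 0 < ub_const.
Proof.
apply: addr_gt0; first by rewrite divr_gt0 ?powR_gt0 // mulr_gt0 // eta_gt0.
by rewrite mulr_gt0 // powR_gt0 // mulr_gt0.
Qed.

(* Lower bound at scale t = e^-L: take m = 2 (floor L + 1), so that 2^-m < t
   while ln (m+1) <= 2 ln (1 + L). *)
Lemma cantor_nbhd_lb L : 5 <= L ->
  ((lb_const * (ln (1 + L) `^ (s - 1))^-1)%:E <= mu (nbhd_set K (expR (- L))))%E.
Proof.
move=> L5; set N := Num.truncn L; set m := (2 * N.+1)%N.
have /andP[NL LN] : N%:R <= L < N.+1%:R by apply: truncn_itv; lra.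
have m_small : (2 ^+ m)^-1 < expR (- L).
  rewrite expRN ltf_pV2 ?posrE ?expR_gt0 ?exprn_gt0 //.
  by apply: lt_le_trans (expR_half_le_pow2 R m); rewrite ltr_expR /m natrM; lra.
apply: le_trans (cantor_nbhd_measure_lb a_seq_ge0 cantor_removed_a_seq_le1 m_small).
rewrite lee_fin one_sub_cantor_removed_a_seq.
have m2 : (2 <= m.+1)%N by rewrite ltnS muln_gt0.
have tail := eta_tail_lb s_gt1 m2.
have Lam0 : 0 < ln (1 + L) by rewrite ln_gt0 //; lra.
have profile : (2 `^ (s - 1) * ln (1 + L) `^ (s - 1))^-1 <= log_tail s m.+1%:R.
  rewrite -powRM ?(ltW Lam0) //; apply: inv_powR_antitone (ltW s_sub1_gt0) _ _.
    by rewrite ln_gt0 // ltr1n ltnS muln_gt0.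
  have -> : 2 * ln (1 + L) = ln ((1 + L) * (1 + L)) by rewrite lnM ?posrE; lra.
  rewrite ler_ln ?posrE ?ltr0n ?mulr_gt0 //; try lra.
  by rewrite /m -natr1 natrM; nra.
have eta0 := eta_gt0 s_gt1.
rewrite ler_pdivlMr //.
have -> : lb_const * (ln (1 + L) `^ (s - 1))^-1 * eta_s s
    = tail_const s * (2 `^ (s - 1) * ln (1 + L) `^ (s - 1))^-1.
  by rewrite /lb_const; field; rewrite !gt_eqF ?powR_gt0.
by apply: le_trans tail; rewrite ler_pM2l ?tail_const_gt0.
Qed.

(* Upper bound at scale t = e^-L: take M = floor (L/2), so that 2^M t <= e^(-L/2)
   while ln (1 + L) <= 2 ln (M+1). *)
Lemma cantor_nbhd_ub L : 5 <= L ->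
  (mu (nbhd_set K (expR (- L))) <= (ub_const * (ln (1 + L) `^ (s - 1))^-1)%:E)%E.
Proof.
move=> L5; set M := Num.truncn (L / 2).
have /andP[ML LM] : M%:R <= L / 2 < M.+1%:R by apply: truncn_itv; lra.
have M2 : (2 <= M.+1)%N.
  by rewrite ltnS -(ltr_nat R 0); move: LM; rewrite -[M.+1%:R]natr1; lra.
apply: le_trans (cantor_nbhd_measure_ub cantor_removed_a_seq_le1 M (expR_gt0 (- L))) _.
rewrite lee_fin one_sub_cantor_removed_a_seq /ub_const [X in _ <= X]mulrDl.
have eta0 := eta_gt0 s_gt1.
have Lam0 : 0 < ln (1 + L) by rewrite ln_gt0 //; lra.
have LamL : ln (1 + L) <= L by apply: le_ln1Dx; lra.
apply: lerD.
- have profile : log_tail s M.+1%:R <= 2 `^ (s - 1) * (ln (1 + L) `^ (s - 1))^-1.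
    apply: inv_powR_halve (ltW s_sub1_gt0) Lam0 _.
    have -> : 2 * ln M.+1%:R = ln (M.+1%:R * M.+1%:R : R).
      by rewrite lnM ?posrE ?ltr0n //; lra.
    by rewrite ler_ln ?posrE ?mulr_gt0 ?ltr0n //; nra.
  rewrite ler_pdivrMr //; apply: le_trans (eta_tail_ub s_gt1 M2) _.
  have -> : 2 `^ (s - 1) / ((s - 1) * eta_s s) * (ln (1 + L) `^ (s - 1))^-1 * eta_s s
      = 2 `^ (s - 1) * (ln (1 + L) `^ (s - 1))^-1 / (s - 1).
    by field; rewrite !gt_eqF ?powR_gt0.
  by rewrite ler_pM2r ?invr_gt0.
- have powM : 2 ^+ M <= expR (L / 2).
    by apply: le_trans (pow2_le_expR R M) _; rewrite ler_expR.
  have decay : ln (1 + L) `^ (s - 1) * expR (- (L / 2)) <= (2 * (s - 1)) `^ (s - 1).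
    apply: le_trans (powR_mul_expR_le s_sub1_gt0 (_ : 0 < L)); last lra.
    rewrite ler_pM2r ?expR_gt0 //.
    by apply: ge0_ler_powR; rewrite ?nnegrE ?(ltW s_sub1_gt0) ?(ltW Lam0) //; lra.
  have splitL : expR (- (L / 2)) = expR (L / 2) * expR (- L).
    by rewrite -expRD; congr expR; lra.
  apply: le_trans (_ : 2 * expR (- (L / 2)) <= _).
    by rewrite splitL mulrCA ler_pM2l // ler_pM2r ?expR_gt0.
  by rewrite -mulrA ler_pM2l // ler_pdivlMr ?powR_gt0 // mulrC.
Qed.

End EtaCantorSet.

Unset Implicit Arguments.

Theorem lemma4p5 (R : realType) (s : R) (hs : 1 < s) :
  exists c1 c2 b t0 : R,
    0 < c1 /\ 0 < c2 /\ 0 < b /\ 0 < t0 /\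
    (forall t : R, 0 < t <= t0 -> 0 < ln (ln (b / t))) /\
    (forall t : R, 0 < t <= t0 ->
       ((c1 * (ln (ln (b / t))) `^ (1 - s))%:E
          <= (@lebesgue_measure R) (nbhd_set (cantor_set (a_seq s)) t))%E /\
       ((@lebesgue_measure R) (nbhd_set (cantor_set (a_seq s)) t)
          <= (c2 * (ln (ln (b / t))) `^ (1 - s))%:E)%E).
Proof.
(* Write t = e^-L; then ln (e / t) = 1 + L and t <= e^-5 means L >= 5. *)
have scale (t : R) : 0 < t <= expR (-5) ->
    [/\ 5 <= - ln t, ln (expR 1 / t) = 1 + - ln t & t = expR (- - ln t)].
  case/andP=> t0 te; split; last by rewrite opprK lnK.
  - by rewrite lerNr -[X in _ <= X](expRK (-5)) ler_ln ?posrE ?expR_gt0.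
  - by rewrite ln_div ?posrE ?expR_gt0 // expRK.
exists (lb_const s), (ub_const s), (expR 1), (expR (-5)).
split; first exact: lb_const_gt0 hs.
split; first exact: ub_const_gt0 hs.
split; first exact: expR_gt0.
split; first exact: expR_gt0.
split=> t /scale [L5 lnE tE]; rewrite lnE.
  by rewrite ln_gt0 //; lra.
rewrite -[1 - s]opprB powRN; split.
- by have := cantor_nbhd_lb hs L5; rewrite -tE.
- by have := cantor_nbhd_ub hs L5; rewrite -tE.
Qed.
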